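(* Let $m\geq 1$ be an integer and $\omega\in[-1,1]$. The function $$W_{m,\omega}(x)=m-1-\frac{m}{1-x}+\frac{1-\omega x}{(1-x)^{m+1}(1-2\omega x+x^2)}$$ is absolutely monotonic on $(0,1)$, i.e. it has derivatives of all orders there and $W_{m,\omega}^{(n)}(x)\geq 0$ for all $n=0,1,2,\dots$ and all $x\in(0,1)$. *)

From Stdlib Require Import Reals.
From Coquelicot Require Import Coquelicot.
Open Scope R_scope.

Definition W (m : nat) (omega : R) (x : R) : R :=
  INR m - 1 - INR m / (1 - x)
  + (1 - omega * x) / ((1 - x) ^ (m + 1) * (1 - 2 * omega * x + x ^ 2)).

Definition absolutely_monotonic_on (f : R -> R) (a b : R) : Prop :=
  forall (n : nat) (x : R), a < x < b ->
    ex_derive_n f n x /\ 0 <= Derive_n f n x.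

From Stdlib Require Import Reals Lra Lia Psatz.
From Coquelicot Require Import Coquelicot.
Open Scope R_scope.

(* Call f "nonnegatively expandable" if on the disk |x| < 1 it is
   the sum of a power series with nonnegative coefficients.  Such an f is
   absolutely monotonic on (0,1), since termwise differentiation keeps the
   coefficients nonnegative.  The class is closed under sums, nonnegative
   scalings, products and multiplication by x, and contains 1/(1-x).
   Write omega = 2t^2 - 1 with |t| <= 1.  The heart of the proof is the
   expansion  (1+x)/((1-x)(1 - 2 omega x + x^2)) = sum_k U_k(t)^2 x^k,  where
   U_k are the Chebyshev polynomials of the second kind: the squares U_k(t)^2
   obey a third-order linear recurrence whose reversed characteristic
   polynomial is the cubic denominator, and the bound |U_k(t)| <= k+1 makes the remainder of the
   partial sums vanish.  Finally W_1 = x^2/(2(1-x)^2) + (sum_k U_k^2 x^k - 1)/2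
   and W_{m+1} = W_m/(1-x) + m x^2/(1-x)^2, so every W_m is nonnegatively
   expandable by induction on m. *)

Lemma scal_pow_n (x : R) (k : nat) (c : R) : scal (pow_n x k) c = c * x ^ k.
Proof. rewrite pow_n_pow. unfold scal; simpl; unfold mult; simpl. ring. Qed.

Definition pseries_on_disk (f : R -> R) (a : nat -> R) : Prop :=
  forall x, Rabs x < 1 -> is_pseries a x (f x).

(* A series converging on the whole unit disk has radius of convergence >= 1:
   for |x| < 1 the series converges at the larger point (|x|+1)/2. *)
Lemma pseries_on_disk_radius f a :
  pseries_on_disk f a -> forall x, Rabs x < 1 -> Rbar_lt (Rabs x) (CV_radius a).
Proof.
  intros Hf x Hx.
  destruct (Rbar_le_lt_dec (CV_radius a) (Rabs x)) as [Hle|Hlt]; [|exact Hlt].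
  exfalso.
  set (y := (Rabs x + 1) / 2).
  assert (Hx0 : 0 <= Rabs x) by apply Rabs_pos.
  assert (Hy : Rabs y = y) by (apply Rabs_pos_eq; unfold y; lra).
  apply (CV_disk_outside a y).
  - eapply Rbar_le_lt_trans; [exact Hle|]. simpl. rewrite Hy. unfold y. lra.
  - assert (Hs : ex_series (fun k => scal (pow_n y k) (a k))).
    { eexists. apply Hf. rewrite Hy. unfold y. lra. }
    apply ex_series_lim_0 in Hs.
    eapply is_lim_seq_ext; [|exact Hs].
    intros n; cbv beta; apply scal_pow_n.
Qed.

Lemma pseries_on_disk_ext f g a :
  (forall x, Rabs x < 1 -> f x = g x) -> pseries_on_disk f a -> pseries_on_disk g a.
Proof. intros E Hf x Hx. rewrite <- E by exact Hx. apply Hf, Hx. Qed.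

Lemma pseries_on_disk_plus f g a b :
  pseries_on_disk f a -> pseries_on_disk g b ->
  pseries_on_disk (fun x => f x + g x) (PS_plus a b).
Proof. intros Ha Hb x Hx. apply (is_pseries_plus a b x (f x) (g x)); auto. Qed.

Lemma pseries_on_disk_scal c f a :
  pseries_on_disk f a -> pseries_on_disk (fun x => c * f x) (PS_scal c a).
Proof.
  intros Ha x Hx. apply (is_pseries_scal c a x (f x)); auto.
  unfold mult; simpl. ring.
Qed.

Lemma pseries_on_disk_mult f g a b :
  pseries_on_disk f a -> pseries_on_disk g b ->
  pseries_on_disk (fun x => f x * g x) (PS_mult a b).
Proof.
  intros Ha Hb x Hx. apply (is_pseries_mult a b x (f x) (g x)); auto.
  - exact (pseries_on_disk_radius f a Ha x Hx).
  - exact (pseries_on_disk_radius g b Hb x Hx).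
Qed.

Lemma pseries_on_disk_shift f a :
  pseries_on_disk f a -> pseries_on_disk (fun x => x * f x) (PS_incr_1 a).
Proof. intros Ha x Hx. apply (is_pseries_incr_1 a x (f x)); auto. Qed.

Lemma pseries_on_disk_geom : pseries_on_disk (fun x => / (1 - x)) (fun _ => 1).
Proof.
  intros x Hx. unfold is_pseries.
  eapply is_series_ext; [|apply is_series_geom, Hx].
  intros n; cbv beta; rewrite scal_pow_n; symmetry; apply Rmult_1_l.
Qed.

Definition const_coef (c : R) (n : nat) : R := match n with O => c | _ => 0 end.

Lemma pseries_on_disk_const c : pseries_on_disk (fun _ => c) (const_coef c).
Proof.
  intros x Hx.
  change (is_lim_seq (sum_n (fun k => scal (pow_n x k) (const_coef c k))) c).
  eapply is_lim_seq_ext; [|apply is_lim_seq_const].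
  intros N. rewrite sum_n_Reals. induction N as [|N IH].
  - cbn [sum_f_R0]. rewrite scal_pow_n. simpl. ring.
  - rewrite tech5, <- IH, scal_pow_n. simpl. ring.
Qed.

Definition nonneg_expandable (f : R -> R) : Prop :=
  exists a, (forall n, 0 <= a n) /\ pseries_on_disk f a.

Lemma nonneg_expandable_ext f g :
  (forall x, Rabs x < 1 -> f x = g x) -> nonneg_expandable f -> nonneg_expandable g.
Proof.
  intros E [a [Pa Ha]]. exists a; split; auto.
  eapply pseries_on_disk_ext; eauto.
Qed.

Lemma nonneg_expandable_plus f g :
  nonneg_expandable f -> nonneg_expandable g -> nonneg_expandable (fun x => f x + g x).
Proof.
  intros [a [Pa Ha]] [b [Pb Hb]]. exists (PS_plus a b); split.
  - intros n; unfold PS_plus, plus; simpl. specialize (Pa n); specialize (Pb n); lra.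
  - apply pseries_on_disk_plus; auto.
Qed.

Lemma nonneg_expandable_scal c f :
  0 <= c -> nonneg_expandable f -> nonneg_expandable (fun x => c * f x).
Proof.
  intros Hc [a [Pa Ha]]. exists (PS_scal c a); split.
  - intros n; unfold PS_scal, scal; simpl; unfold mult; simpl.
    specialize (Pa n); nra.
  - apply pseries_on_disk_scal; auto.
Qed.

Lemma nonneg_expandable_mult f g :
  nonneg_expandable f -> nonneg_expandable g -> nonneg_expandable (fun x => f x * g x).
Proof.
  intros [a [Pa Ha]] [b [Pb Hb]]. exists (PS_mult a b); split.
  - intros n; unfold PS_mult. apply cond_pos_sum. intros k.
    specialize (Pa k); specialize (Pb (n - k)%nat); nra.
  - apply pseries_on_disk_mult; auto.
Qed.

Lemma nonneg_expandable_shift f :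
  nonneg_expandable f -> nonneg_expandable (fun x => x * f x).
Proof.
  intros [a [Pa Ha]]. exists (PS_incr_1 a); split.
  - intros [|n]; simpl; [unfold zero; simpl; lra | apply Pa].
  - apply pseries_on_disk_shift; auto.
Qed.

Lemma nonneg_expandable_geom : nonneg_expandable (fun x => / (1 - x)).
Proof. exists (fun _ => 1); split; [intros; lra | apply pseries_on_disk_geom]. Qed.

Lemma nonneg_expandable_sq_ratio :
  nonneg_expandable (fun x => x * (x * (/ (1 - x) * / (1 - x)))).
Proof.
  apply nonneg_expandable_shift, nonneg_expandable_shift, nonneg_expandable_mult;
    apply nonneg_expandable_geom.
Qed.

Lemma PSeries_nonneg a x :
  (forall k, 0 <= a k) -> 0 <= x -> Rbar_lt (Rabs x) (CV_radius a) ->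
  0 <= PSeries a x.
Proof.
  intros Pa Hx Hr.
  assert (Hs := PSeries_correct a x (CV_radius_inside a x Hr)).
  apply (is_lim_seq_le (fun _ => 0) (sum_n (fun k => scal (pow_n x k) (a k))) 0
           (PSeries a x)); [|apply is_lim_seq_const|exact Hs].
  intros N. rewrite sum_n_Reals. apply cond_pos_sum. intros k.
  rewrite scal_pow_n. apply Rmult_le_pos; [apply Pa|apply pow_le, Hx].
Qed.

Lemma PS_derive_n_nonneg n a :
  (forall k, 0 <= a k) -> forall k, 0 <= PS_derive_n n a k.
Proof.
  intros Pa k. unfold PS_derive_n. apply Rmult_le_pos; [|apply Pa].
  apply Rmult_le_pos; [apply pos_INR|].
  left; apply Rinv_0_lt_compat, lt_0_INR, Factorial.lt_O_fact.
Qed.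

(* Nonnegatively expandable functions are absolutely monotonic on (0,1):
   near x, f coincides with the power series, whose n-th derivative is the
   power series with coefficients PS_derive_n n a. *)
Lemma nonneg_expandable_abs_monotonic f :
  nonneg_expandable f -> absolutely_monotonic_on f 0 1.
Proof.
  intros [a [Pa Ha]] n x Hx.
  assert (Hax : Rabs x < 1) by (rewrite Rabs_pos_eq; lra).
  assert (Hr := pseries_on_disk_radius f a Ha x Hax).
  assert (Hloc : locally x (fun y => PSeries a y = f y)).
  { apply (locally_interval _ x (-1) 1); simpl; try lra.
    intros y H1 H2. apply is_pseries_unique, Ha, Rabs_def1; lra. }
  split.
  - eapply ex_derive_n_ext_loc; [exact Hloc|]. apply ex_derive_n_PSeries, Hr.
  - rewrite <- (Derive_n_ext_loc _ _ n x Hloc), Derive_n_PSeries by exact Hr.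
    apply PSeries_nonneg; [apply PS_derive_n_nonneg, Pa | lra |].
    rewrite CV_radius_derive_n. exact Hr.
Qed.

Fixpoint chebU (t : R) (n : nat) : R :=
  match n with
  | O => 1
  | S O => 2 * t
  | S (S j as k) => 2 * t * chebU t k - chebU t j
  end.

Lemma chebU_SS t n : chebU t (S (S n)) = 2 * t * chebU t (S n) - chebU t n.
Proof. reflexivity. Qed.

(* The conserved quadratic form of the recurrence (Cassini-type identity). *)
Lemma chebU_cassini t n :
  chebU t (S n) * chebU t (S n) - 2 * t * chebU t n * chebU t (S n)
  + chebU t n * chebU t n = 1.
Proof.
  induction n as [|n IH].
  - simpl. ring.
  - rewrite chebU_SS, <- IH. ring.
Qed.

(* |U_n(t)| <= n+1 on [-1,1]: the identity above, rewritten as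
   (U_(n+1) - t U_n)^2 + (1 - t^2) U_n^2 = 1, gives |U_(n+1) - t U_n| <= 1. *)
Lemma chebU_bound t n : -1 <= t <= 1 -> - (INR n + 1) <= chebU t n <= INR n + 1.
Proof.
  intros Ht. induction n as [|n IH]; [simpl; lra|].
  rewrite S_INR.
  assert (C := chebU_cassini t n).
  set (a := chebU t n) in *; set (b := chebU t (S n)) in *.
  assert (Hsq : (b - t * a) * (b - t * a) <= 1).
  { assert (0 <= (1 - t * t) * (a * a)) by (apply Rmult_le_pos; nra). nra. }
  assert (-1 <= b - t * a <= 1) by nra.
  assert (- (INR n + 1) <= t * a <= INR n + 1) by nra.
  lra.
Qed.

Definition chebU2 (t : R) (n : nat) : R := chebU t n * chebU t n.

Lemma chebU2_rec t n :
  chebU2 t (S (S (S n))) =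
  (4 * t * t - 1) * chebU2 t (S (S n)) - (4 * t * t - 1) * chebU2 t (S n) + chebU2 t n.
Proof. unfold chebU2. rewrite !chebU_SS. ring. Qed.

Lemma chebU2_bound t n : -1 <= t <= 1 -> 0 <= chebU2 t n <= (INR n + 1) * (INR n + 1).
Proof. intros Ht. assert (H := chebU_bound t n Ht). unfold chebU2. split; nra. Qed.

(* The characteristic cubic of the recurrence of chebU2:
   1 - p x + p x^2 - x^3 = (1 - x)(1 - 2 omega x + x^2) with omega = 2t^2 - 1. *)
Definition cheb_cubic (t x : R) : R :=
  1 - (4 * t * t - 1) * x + (4 * t * t - 1) * x * x - x * x * x.

Lemma cheb_cubic_factor t x :
  cheb_cubic t x = (1 - x) * (1 - 2 * (2 * t * t - 1) * x + x ^ 2).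
Proof. unfold cheb_cubic. ring. Qed.

Lemma quadratic_pos omega x :
  -1 <= omega <= 1 -> Rabs x < 1 -> 0 < 1 - 2 * omega * x + x ^ 2.
Proof.
  intros Ho Hx. apply Rabs_def2 in Hx.
  destruct (Rle_lt_dec 0 x); nra.
Qed.

(* Remainder coefficient of the N+3-term partial sum multiplied by the cubic. *)
Definition cheb_rem (t x : R) (N : nat) : R :=
  let p := 4 * t * t - 1 in
  (- p * chebU2 t (N + 2) + p * chebU2 t (N + 1) - chebU2 t N)
  + (p * chebU2 t (N + 2) - chebU2 t (N + 1)) * x - chebU2 t (N + 2) * x * x.

Lemma cheb_partial_sum t x N :
  cheb_cubic t x * sum_f_R0 (fun k => chebU2 t k * x ^ k) (N + 2)
  = (1 + x) + x ^ (N + 3) * cheb_rem t x N.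
Proof.
  induction N as [|N IH].
  - unfold cheb_cubic, cheb_rem, chebU2. simpl. ring.
  - replace (S N + 2)%nat with (S (N + 2)) by lia.
    rewrite tech5, Rmult_plus_distr_l, IH.
    unfold cheb_rem.
    replace (S (N + 2)) with (S (S (S N))) by lia.
    replace (S N + 2)%nat with (S (S (S N))) by lia.
    replace (S N + 1)%nat with (S (S N)) by lia.
    replace (N + 2)%nat with (S (S N)) by lia.
    replace (N + 1)%nat with (S N) by lia.
    replace (S N + 3)%nat with (S (S (S (S N)))) by lia.
    replace (N + 3)%nat with (S (S (S N))) by lia.
    rewrite !chebU2_rec. simpl pow. unfold cheb_cubic. ring.
Qed.

Lemma cheb_rem_bound t x N :
  -1 <= t <= 1 -> Rabs x < 1 ->
  Rabs (cheb_rem t x N) <= 12 * ((INR N + 3) * (INR N + 3)).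
Proof.
  intros Ht Hx. apply Rabs_def2 in Hx.
  set (B := (INR N + 3) * (INR N + 3)).
  assert (HN : 0 <= INR N) by apply pos_INR.
  assert (V0 := chebU2_bound t N Ht).
  assert (V1 := chebU2_bound t (N + 1) Ht).
  assert (V2 := chebU2_bound t (N + 2) Ht).
  rewrite plus_INR in V1, V2. simpl INR in V1, V2.
  assert (HV0 : chebU2 t N <= B) by (unfold B; nra).
  assert (HV1 : chebU2 t (N + 1) <= B) by (unfold B; nra).
  assert (HV2 : chebU2 t (N + 2) <= B) by (unfold B; nra).
  unfold cheb_rem. cbv zeta.
  set (p := 4 * t * t - 1).
  set (a := chebU2 t (N + 2)) in *; set (b := chebU2 t (N + 1)) in *;
    set (c := chebU2 t N) in *.
  assert (-1 <= p <= 3) by (unfold p; nra).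
  assert (-B <= p * a <= 3 * B) by nra.
  assert (-B <= p * b <= 3 * B) by nra.
  assert (0 <= x * x <= 1) by nra.
  assert (0 <= a * (x * x) <= B) by nra.
  assert (- (4 * B) <= (p * a - b) * x <= 4 * B) by nra.
  replace (a * x * x) with (a * (x * x)) by ring.
  apply Rabs_le. lra.
Qed.

(* (n+1)(n+2)|x|^n -> 0: the terms of the twice-differentiated geometric series. *)
Lemma poly_geom_lim x :
  Rabs x < 1 -> is_lim_seq (fun n => (INR n + 1) * (INR n + 2) * Rabs x ^ n) 0.
Proof.
  intros Hx.
  set (a := PS_derive (PS_derive (fun _ : nat => 1))).
  assert (Hr : Rbar_lt (Rabs x) (CV_radius a)).
  { unfold a. rewrite !CV_radius_derive.
    exact (pseries_on_disk_radius _ _ pseries_on_disk_geom x Hx). }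
  assert (H := ex_series_lim_0 _ (CV_disk_inside a x Hr)).
  eapply is_lim_seq_ext; [|exact H]. intros n; cbv beta.
  unfold a, PS_derive. rewrite Rabs_mult, <- RPow_abs, !S_INR, Rabs_pos_eq.
  - ring.
  - assert (0 <= INR n) by apply pos_INR. nra.
Qed.

Lemma cheb_rem_lim t x :
  -1 <= t <= 1 -> Rabs x < 1 ->
  is_lim_seq (fun N => x ^ (N + 3) * cheb_rem t x N) 0.
Proof.
  intros Ht Hx.
  set (c := fun n => (INR n + 1) * (INR n + 2) * Rabs x ^ n).
  assert (Hc : is_lim_seq (fun N => 12 * c (N + 2)%nat) 0).
  { replace (Finite 0) with (Rbar_mult 12 0) by (simpl; f_equal; ring).
    apply is_lim_seq_scal_l.
    apply (is_lim_seq_incr_n c 2 0), poly_geom_lim, Hx. }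
  apply is_lim_seq_abs_0.
  apply is_lim_seq_le_le with (u := fun _ => 0) (w := fun N => 12 * c (N + 2)%nat);
    [|apply is_lim_seq_const|exact Hc].
  intros N. split; [apply Rabs_pos|].
  assert (Hx0 : 0 <= Rabs x) by apply Rabs_pos.
  assert (HN : 0 <= INR N) by apply pos_INR.
  assert (Hp : 0 <= Rabs x ^ (N + 2)) by (apply pow_le; lra).
  assert (HR := cheb_rem_bound t x N Ht Hx).
  assert (HR0 := Rabs_pos (cheb_rem t x N)).
  rewrite Rabs_mult, <- RPow_abs.
  replace (N + 3)%nat with (S (N + 2)) by lia.
  unfold c. rewrite plus_INR. simpl pow. simpl INR.
  assert (Hq : 12 * ((INR N + 3) * (INR N + 3)) <= 12 * ((INR N + 2 + 1) * (INR N + 2 + 2)))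
    by nra.
  assert (Rabs x * Rabs x ^ (N + 2) <= Rabs x ^ (N + 2)) by nra.
  apply Rle_trans with (Rabs x ^ (N + 2) * (12 * ((INR N + 3) * (INR N + 3)))); nra.
Qed.

Lemma pseries_on_disk_chebU2 t :
  -1 <= t <= 1 -> pseries_on_disk (fun x => (1 + x) / cheb_cubic t x) (chebU2 t).
Proof.
  intros Ht x Hx.
  assert (HD : 0 < cheb_cubic t x).
  { rewrite cheb_cubic_factor. apply Rabs_def2 in Hx as Hx'.
    apply Rmult_lt_0_compat; [lra|]. apply quadratic_pos; [nra|exact Hx]. }
  assert (Hlim : is_lim_seq
            (fun N => (1 + x) / cheb_cubic t x + x ^ (N + 3) * cheb_rem t x N / cheb_cubic t x)
            ((1 + x) / cheb_cubic t x)).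
  { assert (Hrem := is_lim_seq_scal_r _ (/ cheb_cubic t x) 0 (cheb_rem_lim t x Ht Hx)).
    assert (H := is_lim_seq_plus' _ _ _ _ (is_lim_seq_const ((1 + x) / cheb_cubic t x)) Hrem).
    simpl in H. rewrite Rmult_0_l, Rplus_0_r in H. exact H. }
  change (is_lim_seq (sum_n (fun k => scal (pow_n x k) (chebU2 t k)))
                     ((1 + x) / cheb_cubic t x)).
  apply (is_lim_seq_incr_n _ 2).
  eapply is_lim_seq_ext; [|exact Hlim].
  intros N; cbv beta.
  rewrite sum_n_Reals.
  rewrite (sum_eq _ (fun k => chebU2 t k * x ^ k)) by (intros; apply scal_pow_n).
  apply (Rmult_eq_reg_l (cheb_cubic t x)); [|lra].
  rewrite cheb_partial_sum. field. lra.
Qed.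

(* Hence (1+x)/cubic - 1 is nonnegatively expandable (its constant term is U_0^2 - 1 = 0). *)
Lemma nonneg_expandable_chebU2 t :
  -1 <= t <= 1 -> nonneg_expandable (fun x => (1 + x) / cheb_cubic t x - 1).
Proof.
  intros Ht. exists (PS_plus (chebU2 t) (const_coef (-1))). split.
  - intros [|n]; unfold PS_plus, plus; simpl.
    + unfold chebU2; simpl. lra.
    + assert (H := chebU2_bound t (S n) Ht). lra.
  - apply (pseries_on_disk_plus (fun x => (1 + x) / cheb_cubic t x) (fun _ => -1)).
    + apply pseries_on_disk_chebU2, Ht.
    + apply pseries_on_disk_const.
Qed.

Lemma W_one_decomposition t x :
  -1 <= t <= 1 -> Rabs x < 1 ->
  W 1 (2 * t * t - 1) x =
  1 / 2 * (x * (x * (/ (1 - x) * / (1 - x)))) + 1 / 2 * ((1 + x) / cheb_cubic t x - 1).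
Proof.
  intros Ht Hx.
  assert (HQ := quadratic_pos (2 * t * t - 1) x ltac:(nra) Hx).
  apply Rabs_def2 in Hx.
  rewrite cheb_cubic_factor. unfold W. simpl INR.
  replace (1 + 1)%nat with 2%nat by reflexivity.
  field. split; lra.
Qed.

Lemma W_succ m omega x :
  x <> 1 -> 1 - 2 * omega * x + x ^ 2 <> 0 ->
  W (S (S m)) omega x =
  W (S m) omega x * / (1 - x) + INR (S m) * (x * (x * (/ (1 - x) * / (1 - x)))).
Proof.
  intros Hx HQ.
  assert (H1 : 1 - x <> 0) by lra.
  assert (HP : (1 - x) ^ (S m + 1) <> 0) by (apply pow_nonzero, H1).
  unfold W.
  replace (S (S m) + 1)%nat with (S (S m + 1)) by lia.
  change ((1 - x) ^ S (S m + 1)) with ((1 - x) * (1 - x) ^ (S m + 1)).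
  rewrite (S_INR (S m)).
  field. repeat split; assumption.
Qed.

Theorem theorem6 (m : nat) (omega : R) :
  (1 <= m)%nat -> -1 <= omega <= 1 ->
  absolutely_monotonic_on (W m omega) 0 1.
Proof.
  intros Hm Ho.
  set (t := sqrt ((1 + omega) / 2)).
  assert (Htt : t * t = (1 + omega) / 2) by (apply sqrt_sqrt; lra).
  assert (Ht : -1 <= t <= 1) by (assert (0 <= t) by apply sqrt_pos; split; nra).
  assert (Hom : omega = 2 * t * t - 1) by lra.
  assert (HW : forall k, nonneg_expandable (W (S k) omega)).
  { induction k as [|k IH].
    - rewrite Hom. eapply nonneg_expandable_ext.
      { intros x Hx. symmetry. exact (W_one_decomposition t x Ht Hx). }
      apply nonneg_expandable_plus; apply nonneg_expandable_scal; try lra.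
      + apply nonneg_expandable_sq_ratio.
      + apply nonneg_expandable_chebU2, Ht.
    - eapply nonneg_expandable_ext.
      { intros x Hx. symmetry. apply W_succ.
        - apply Rabs_def2 in Hx. lra.
        - apply Rgt_not_eq, quadratic_pos; assumption. }
      apply nonneg_expandable_plus.
      + apply nonneg_expandable_mult; [exact IH|apply nonneg_expandable_geom].
      + apply nonneg_expandable_scal; [apply pos_INR|apply nonneg_expandable_sq_ratio]. }
  destruct m as [|k]; [lia|].
  apply nonneg_expandable_abs_monotonic, HW.
Qed.
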